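(* Let $\mu\in(0,1/2]$, $d=\sqrt{1-3\mu+3\mu^2}$, $\lambda_1=\tfrac32(1-d)$, $\lambda_2=\tfrac32(1+d)$, and consider the planar system $\ddot x-2\dot y=\Omega_x$, $\ddot y+2\dot x=\Omega_y$ with $\Omega(x,y)=\tfrac12(\lambda_2x^2+\lambda_1y^2)+\frac{1}{\sqrt{x^2+y^2}}$ and its equilibrium points $L_{3,4}=(0,\pm\lambda_1^{-1/3})$. Let $A=\begin{pmatrix}0&0&1&0\\0&0&0&1\\ \Omega_{xx}&\Omega_{xy}&0&2\\ \Omega_{xy}&\Omega_{yy}&-2&0\end{pmatrix}$ be the linearization at $L_3$ (or $L_4$), with characteristic polynomial $\lambda^4+\mathcal A\lambda^2+B$, $\mathcal A=4-\Omega_{xx}-\Omega_{yy}$, $B=\Omega_{xx}\Omega_{yy}-\Omega_{xy}^2$, and let $D=\mathcal A^2-4B$. Then there exists a value $\mu_0$ with $D=0$, such that: for $\mu\in(0,\mu_0)$ the eigenvalues of $A$ are $\pm i\omega_1,\pm i\omega_2$; for $\mu=\mu_0$ there is a pair of eigenvalues $\pm i\omega$ of multiplicity $2$; and for $\mu\in(\mu_0,1/2]$ the eigenvalues are $\pm\alpha\pm i\omega$ with $\alpha>0$, $\omega>0$.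
   Context: This is the planar Hill approximation of the restricted four-body problem (in rotated coordinates) near a small mass at a vertex of an equilateral triangle with masses $1-\mu$ and $\mu$. Second derivatives of $\Omega$ are evaluated at the equilibrium point. *)

From HB Require Import structures.
From mathcomp Require Import all_boot all_order all_algebra.
From mathcomp Require Import all_classical all_reals all_analysis.
From mathcomp Require Import complex.

Set Implicit Arguments.
Unset Strict Implicit.
Unset Printing Implicit Defensive.

Import Order.TTheory GRing.Theory Num.Theory.
Import numFieldNormedType.Exports.
Local Open Scope ring_scope.

Section Hill.
Variable R : realType.

Definition dmu (mu : R) : R := Num.sqrt (1 - 3 * mu + 3 * mu ^+ 2).
Definition lam1 (mu : R) : R := 3 / 2 * (1 - dmu mu).
Definition lam2 (mu : R) : R := 3 / 2 * (1 + dmu mu).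

Definition Omega (mu x y : R) : R :=
  (lam2 mu * x ^+ 2 + lam1 mu * y ^+ 2) / 2 + (Num.sqrt (x ^+ 2 + y ^+ 2))^-1.

Definition Omega_xx (mu : R) (p : R * R) : R :=
  derive1 (fun x => derive1 (fun x' => Omega mu x' p.2) x) p.1.
Definition Omega_yy (mu : R) (p : R * R) : R :=
  derive1 (fun y => derive1 (fun y' => Omega mu p.1 y') y) p.2.
Definition Omega_xy (mu : R) (p : R * R) : R :=
  derive1 (fun y => derive1 (fun x => Omega mu x y) p.1) p.2.

Definition L3 (mu : R) : R * R := (0, lam1 mu `^ (- (1 / 3))).
Definition L4 (mu : R) : R * R := (0, - lam1 mu `^ (- (1 / 3))).

Definition linA (mu : R) (p : R * R) : 'M[R]_4 :=
  \matrix_(i < 4, j < 4)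
    match nat_of_ord i, nat_of_ord j with
    | 0%N, 2%N => 1
    | 1%N, 3%N => 1
    | 2%N, 0%N => Omega_xx mu p
    | 2%N, 1%N => Omega_xy mu p
    | 2%N, 3%N => 2
    | 3%N, 0%N => Omega_xy mu p
    | 3%N, 1%N => Omega_yy mu p
    | 3%N, 2%N => -2
    | _, _ => 0
    end.

(* complexification of A; its eigenvalues are the complex eigenvalues of A *)
Definition linAC (mu : R) (p : R * R) : 'M[R[i]]_4 :=
  map_mx (fun r : R => (r%:C)%C) (linA mu p).

Definition calA (mu : R) (p : R * R) : R := 4 - Omega_xx mu p - Omega_yy mu p.
Definition calB (mu : R) (p : R * R) : R :=
  Omega_xx mu p * Omega_yy mu p - Omega_xy mu p ^+ 2.
Definition discrD (mu : R) (p : R * R) : R := calA mu p ^+ 2 - 4 * calB mu p.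

End Hill.

(* The linearisation has the block form [[0, I], [Hess Omega, 2J]], so its
   characteristic polynomial is the biquadratic X^4 + calA X^2 + calB.  On the
   axis x = 0 one computes Omega_xx = lambda_2 - |y|^-3, Omega_xy = 0 and
   Omega_yy = lambda_1 + 2|y|^-3, and at L_3, L_4 we have |y|^-3 = lambda_1;
   hence calA = (3d - 1)/2 > 0, calB = 27/2 d (1 - d) > 0 and
   D = 225/4 (d - d_+) (d - d_-) with d_+- = (37 +- 8 sqrt 21)/75.  Since
   d^2 = 1/4 + 3 (mu - 1/2)^2, d decreases from 1 to 1/2 on (0, 1/2], while
   d_- < 1/2 < d_+ < 1: so D changes sign exactly once, at the mu_0 with
   d(mu_0) = d_+.  Finally, the roots of a real biquadratic are two imaginary
   pairs when D > 0, one double imaginary pair when D = 0 and a quadruple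
   +-alpha +- i omega when D < 0. *)

From HB Require Import structures.
From mathcomp Require Import all_boot all_order all_algebra.
From mathcomp Require Import all_classical all_reals all_analysis.
From mathcomp Require Import complex.
From mathcomp Require Import ring lra.

Set Implicit Arguments.
Unset Strict Implicit.
Unset Printing Implicit Defensive.

Import Order.TTheory GRing.Theory Num.Theory.
Import numFieldNormedType.Exports.
Local Open Scope ring_scope.

Section Biquadratic.
Variable T : comNzRingType.

Definition biquad (a b : T) : {poly T} := 'X^4 + a%:P * 'X^2 + b%:P.

Definition hill_mx (a b c : T) : 'M[T]_4 :=
  \matrix_(i < 4, j < 4)
    match nat_of_ord i, nat_of_ord j with
    | 0%N, 2%N => 1
    | 1%N, 3%N => 1
    | 2%N, 0%N => a
    | 2%N, 1%N => b
    | 2%N, 3%N => 2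
    | 3%N, 0%N => b
    | 3%N, 1%N => c
    | 3%N, 2%N => -2
    | _, _ => 0
    end.

Lemma char_poly_hill_mx (a b c : T) :
  char_poly (hill_mx a b c) = biquad (4 - a - c) (a * c - b ^+ 2).
Proof.
rewrite /char_poly /char_poly_mx.
repeat rewrite (expand_det_row _ ord0) !big_ord_recl big_ord0 /cofactor !mxE /=
  ?(mulr1n, mulr0n, polyC0, subr0, sub0r, mul0r, mulr0, add0r, addr0).
rewrite !det_mx00 /bump /= /biquad !(polyCN, polyC1, polyCB, polyCM, polyC_exp).
ring.
Qed.

Lemma prod_XsubC_opp_pairs (c e : T) :
  \prod_(x <- [:: c; - c; e; - e]) ('X - x%:P) =
  biquad (- (c ^+ 2 + e ^+ 2)) (c ^+ 2 * e ^+ 2).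
Proof.
rewrite !big_cons big_nil /biquad !(polyCN, polyCD, polyCM, polyC_exp); ring.
Qed.

End Biquadratic.

Lemma map_biquad (T U : comNzRingType) (f : {rmorphism T -> U}) (a b : T) :
  map_poly f (biquad a b) = biquad (f a) (f b).
Proof. by rewrite /biquad !rmorphD rmorphM /= !map_polyXn !map_polyC. Qed.

Section MultipleRoots.
Variable F : fieldType.

Lemma double_roots_XsubC (x y : F) (p := ('X - x%:P) ^+ 2 * ('X - y%:P) ^+ 2) :
  x != y -> [/\ forall z, root p z = (z \in [:: x; y]), mup x p = 2%N & mup y p = 2%N].
Proof.
move=> xy; have nz (a : F) : ('X - a%:P) ^+ 2 != 0 by rewrite expf_neq0 ?polyXsubC_eq0.
split.
- by move=> z; rewrite rootM !root_exp_XsubC !inE.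
- by rewrite mupM // !mup_XsubCX eqxx eq_sym (negbTE xy).
- by rewrite mupM // !mup_XsubCX eqxx (negbTE xy).
Qed.

End MultipleRoots.

Section ComplexBiquadratic.
Variable R : rcfType.
Local Open Scope complex_scope.

Lemma oppc_Complex (a b : R) : - Complex a b = Complex (- a) (- b).
Proof. by []. Qed.

Lemma mulc_Complex (a b c d : R) :
  Complex a b * Complex c d = Complex (a * c - b * d) (a * d + b * c).
Proof. by []. Qed.

Lemma biquad_imag_pairs (w1 w2 : R) :
  biquad ((w1 ^+ 2 + w2 ^+ 2)%:C) ((w1 ^+ 2 * w2 ^+ 2)%:C) =
  \prod_(x <- [:: Complex 0 w1; Complex 0 (- w1); Complex 0 w2; Complex 0 (- w2)])
    ('X - x%:P).
Proof.
have opp_imag (w : R) : Complex 0 (- w) = - Complex 0 w by rewrite oppc_Complex oppr0.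
rewrite !opp_imag prod_XsubC_opp_pairs !expr2 !mulc_Complex.
by congr biquad; apply/eqP; rewrite eq_complex /=; apply/andP; split; apply/eqP; ring.
Qed.

Lemma biquad_complex_quadruple (a w : R) :
  biquad ((2 * (w ^+ 2 - a ^+ 2))%:C) (((a ^+ 2 + w ^+ 2) ^+ 2)%:C) =
  \prod_(x <- [:: Complex a w; Complex a (- w); Complex (- a) w; Complex (- a) (- w)])
    ('X - x%:P).
Proof.
rewrite (perm_big [:: Complex a w; - Complex a w; Complex a (- w); - Complex a (- w)]).
  rewrite prod_XsubC_opp_pairs !expr2 !mulc_Complex.
  by congr biquad; apply/eqP; rewrite eq_complex /=; apply/andP; split; apply/eqP; ring.
by rewrite !oppc_Complex opprK perm_cons; apply/permPl/(perm_rot 1 [:: _; _; _]).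
Qed.

Lemma eigenvalue_biquad_imag n (M : 'M[R[i]]_n) (A B : R) :
  char_poly M = biquad A%:C B%:C -> 0 < A -> 0 < B -> 0 < A ^+ 2 - 4 * B ->
  exists w1 w2 : R, [/\ 0 < w1, 0 < w2, w1 != w2 &
    forall z, eigenvalue M z <->
      z \in [:: Complex 0 w1; Complex 0 (- w1); Complex 0 w2; Complex 0 (- w2)]].
Proof.
move=> charM A_gt0 B_gt0 D_gt0; pose sD := Num.sqrt (A ^+ 2 - 4 * B).
have sD2 : sD ^+ 2 = A ^+ 2 - 4 * B by rewrite sqr_sqrtr ?ltW.
have sD_gt0 : 0 < sD by rewrite sqrtr_gt0.
have sD_ltA : sD < A by rewrite -(ltr_pXn2r (_ : 0 < 2)%N) ?nnegrE ?ltW // sD2; lra.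
pose w1 := Num.sqrt ((A + sD) / 2); pose w2 := Num.sqrt ((A - sD) / 2).
have w1_2 : w1 ^+ 2 = (A + sD) / 2 by rewrite sqr_sqrtr //; lra.
have w2_2 : w2 ^+ 2 = (A - sD) / 2 by rewrite sqr_sqrtr //; lra.
have hA : A = w1 ^+ 2 + w2 ^+ 2 by rewrite w1_2 w2_2; lra.
have hB : B = w1 ^+ 2 * w2 ^+ 2 by rewrite w1_2 w2_2; nra.
exists w1, w2; split; [by rewrite sqrtr_gt0; lra | by rewrite sqrtr_gt0; lra | |].
  by apply/eqP => /(congr1 (fun x => x ^+ 2)); rewrite w1_2 w2_2; lra.
by move=> z; rewrite eigenvalue_root_char charM hA hB biquad_imag_pairs root_prod_XsubC.
Qed.

Lemma eigenvalue_biquad_double n (M : 'M[R[i]]_n) (A B : R) :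
  char_poly M = biquad A%:C B%:C -> 0 < A -> A ^+ 2 - 4 * B = 0 ->
  exists w : R, [/\ 0 < w,
    forall z, eigenvalue M z <-> z \in [:: Complex 0 w; Complex 0 (- w)],
    mup (Complex 0 w) (char_poly M) = 2%N &
    mup (Complex 0 (- w)) (char_poly M) = 2%N].
Proof.
move=> charM A_gt0 D0; pose w := Num.sqrt (A / 2).
have w2 : w ^+ 2 = A / 2 by rewrite sqr_sqrtr //; lra.
have w_gt0 : 0 < w by rewrite sqrtr_gt0; lra.
have hA : A = w ^+ 2 + w ^+ 2 by rewrite w2; lra.
have hB : B = w ^+ 2 * w ^+ 2 by rewrite w2; nra.
have {}charM : char_poly M =
    ('X - (Complex 0 w)%:P) ^+ 2 * ('X - (Complex 0 (- w))%:P) ^+ 2.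
  rewrite charM hA hB biquad_imag_pairs !big_cons big_nil; ring.
have w_neq : Complex 0 w != Complex 0 (- w).
  by apply/eqP => -[w_eq]; lra.
have [roots mup1 mup2] := double_roots_XsubC w_neq.
exists w; rewrite charM; split; [exact: w_gt0 | move=> z | exact: mup1 | exact: mup2].
by rewrite eigenvalue_root_char charM roots.
Qed.

Lemma eigenvalue_biquad_complex n (M : 'M[R[i]]_n) (A B : R) :
  char_poly M = biquad A%:C B%:C -> A ^+ 2 - 4 * B < 0 ->
  exists alpha w : R, [/\ 0 < alpha, 0 < w &
    forall z, eigenvalue M z <->
      z \in [:: Complex alpha w; Complex alpha (- w);
                Complex (- alpha) w; Complex (- alpha) (- w)]].
Proof.
move=> charM D_lt0; have B_gt0 : 0 < B by nra.
pose sB := Num.sqrt B; have sB2 : sB ^+ 2 = B by rewrite sqr_sqrtr ?ltW.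
have sB_gt0 : 0 < sB by rewrite sqrtr_gt0.
have [halfA_gt halfA_lt] : - sB < A / 2 /\ A / 2 < sB by split; nra.
pose al := Num.sqrt ((sB - A / 2) / 2); pose w := Num.sqrt ((sB + A / 2) / 2).
have al2 : al ^+ 2 = (sB - A / 2) / 2 by rewrite sqr_sqrtr //; lra.
have w2 : w ^+ 2 = (sB + A / 2) / 2 by rewrite sqr_sqrtr //; lra.
have hA : A = 2 * (w ^+ 2 - al ^+ 2) by rewrite al2 w2; lra.
have hB : B = (al ^+ 2 + w ^+ 2) ^+ 2 by rewrite al2 w2 -sB2; congr (_ ^+ 2); lra.
exists al, w; split; [by rewrite sqrtr_gt0; lra | by rewrite sqrtr_gt0; lra |].
by move=> z; rewrite eigenvalue_root_char charM hA hB biquad_complex_quadruple root_prod_XsubC.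
Qed.

End ComplexBiquadratic.

Section RadialDerivatives.
Variable R : realType.

Let scalerE (a b : R) : a *: b = a * b := erefl.

Lemma is_derive_sqrt_sqrD (c t : R) : 0 < t ^+ 2 + c ->
  is_derive t 1 (fun u => Num.sqrt (u ^+ 2 + c)) (t / Num.sqrt (t ^+ 2 + c)).
Proof.
move=> tc_gt0; have sqrt_gt0 : 0 < Num.sqrt (t ^+ 2 + c) by rewrite sqrtr_gt0.
have dsq : is_derive t 1 (fun u : R => u ^+ 2 + c) (2 * t).
  apply: is_derive_eq (is_deriveD (is_deriveX 2 (is_derive_id t 1)) (is_derive_cst c t 1)) _.
  by rewrite expr1 addr0; exact: mulr1.
apply: is_derive_eq (is_derive1_comp (g := fun u => u ^+ 2 + c) (is_derive1_sqrt tc_gt0) dsq) _.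
by field; rewrite gt_eqF.
Qed.

Lemma is_derive_sqrt_sqrD_invX (c t : R) n : 0 < t ^+ 2 + c ->
  is_derive t 1 (fun u => Num.sqrt (u ^+ 2 + c) ^- n)
    (- (n%:R * t) * Num.sqrt (t ^+ 2 + c) ^- n.+2).
Proof.
move=> tc_gt0; have s_neq0 : Num.sqrt (t ^+ 2 + c) != 0 by rewrite gt_eqF ?sqrtr_gt0.
have dsn := is_deriveX n (is_derive_sqrt_sqrD tc_gt0).
have := is_deriveV _ dsn; rewrite exprfctE => /(_ (expf_neq0 _ s_neq0)) dsV.
apply: is_derive_eq dsV _; clear dsn.
rewrite !scalerE; case: n => [|n]; first by rewrite !(mul0r, mulr0, oppr0).
set s := Num.sqrt _ in s_neq0 *; rewrite /= !exprS.
by field; rewrite s_neq0 expf_neq0.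
Qed.

Lemma is_derive_radial_potential (a b c t : R) : 0 < t ^+ 2 + c ->
  is_derive t 1 (fun u => (a * u ^+ 2 + b) / 2 + (Num.sqrt (u ^+ 2 + c))^-1)
    (a * t - t * Num.sqrt (t ^+ 2 + c) ^- 3).
Proof.
move=> tc_gt0.
have dsq := is_deriveX 2 (is_derive_id t (1 : R)).
have dquad := is_deriveM (is_deriveD (is_deriveM (is_derive_cst a t 1) dsq)
  (is_derive_cst b t 1)) (is_derive_cst (2^-1 : R) t 1).
apply: is_derive_eq (is_deriveD dquad (is_derive_sqrt_sqrD_invX 1 tc_gt0)) _.
by rewrite !scalerE /=; field; rewrite gt_eqF ?sqrtr_gt0.
Qed.

Lemma is_derive_linear_sub_radial (a c t : R) : 0 < t ^+ 2 + c ->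
  is_derive t 1 (fun u => a * u - u * Num.sqrt (u ^+ 2 + c) ^- 3)
    (a - Num.sqrt (t ^+ 2 + c) ^- 3 + 3 * t ^+ 2 * Num.sqrt (t ^+ 2 + c) ^- 5).
Proof.
move=> tc_gt0; have did := is_derive_id t (1 : R).
apply: is_derive_eq (is_deriveB (is_deriveM (is_derive_cst a t 1) did)
  (is_deriveM did (is_derive_sqrt_sqrD_invX 3 tc_gt0))) _.
by rewrite !scalerE /=; field; rewrite gt_eqF ?sqrtr_gt0.
Qed.

End RadialDerivatives.

Section HillPotential.
Variable R : realType.
Implicit Types mu x y : R.

Lemma derive1_val (f : R -> R) x d : is_derive x 1 f d -> derive1 f x = d.
Proof. by move=> fd; rewrite derive1E derive_val. Qed.

Lemma is_derive_Omega_x mu x y : 0 < x ^+ 2 + y ^+ 2 ->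
  is_derive x 1 (Omega mu ^~ y) (lam2 mu * x - x * Num.sqrt (x ^+ 2 + y ^+ 2) ^- 3).
Proof. exact: is_derive_radial_potential. Qed.

Lemma is_derive_Omega_y mu x y : 0 < y ^+ 2 + x ^+ 2 ->
  is_derive y 1 (Omega mu x) (lam1 mu * y - y * Num.sqrt (y ^+ 2 + x ^+ 2) ^- 3).
Proof.
have -> : Omega mu x = fun u =>
    (lam1 mu * u ^+ 2 + lam2 mu * x ^+ 2) / 2 + (Num.sqrt (u ^+ 2 + x ^+ 2))^-1.
  by apply/funext => u; rewrite /Omega [lam2 mu * _ + _]addrC [x ^+ 2 + _]addrC.
exact: is_derive_radial_potential.
Qed.

Lemma Omega_xx_axis mu y : y != 0 -> Omega_xx mu (0, y) = lam2 mu - `|y| ^- 3.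
Proof.
move=> y_neq0; have xy_gt0 x : 0 < x ^+ 2 + y ^+ 2.
  by rewrite ltr_wpDl ?sqr_ge0 ?exprn_even_gt0.
rewrite /Omega_xx /=.
have -> : (fun x => derive1 (Omega mu ^~ y) x) =
    fun x => lam2 mu * x - x * Num.sqrt (x ^+ 2 + y ^+ 2) ^- 3.
  by apply/funext => x; apply/derive1_val/is_derive_Omega_x.
rewrite (derive1_val (is_derive_linear_sub_radial _ (xy_gt0 0))).
by rewrite !expr0n /= add0r sqrtr_sqr !(mulr0, mul0r, addr0).
Qed.

Lemma near_neq0 y : y != 0 -> \forall u \near y, u != 0.
Proof. exact: cvgr_neq0 cvg_id. Qed.

Lemma Omega_xy_axis mu y : y != 0 -> Omega_xy mu (0, y) = 0.
Proof.
move=> y_neq0; rewrite /Omega_xy /= derive1E (near_eq_derive (g := cst 0)) ?derive_cst //.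
near=> u; have u_neq0 : u != 0 by near: u; exact: near_neq0.
rewrite (derive1_val (is_derive_Omega_x _ _)) ?mul0r ?mulr0 ?subr0 //.
by rewrite expr0n add0r exprn_even_gt0.
Unshelve. all: by end_near. Qed.

Lemma Omega_yy_axis mu y : y != 0 -> Omega_yy mu (0, y) = lam1 mu + 2 * `|y| ^- 3.
Proof.
move=> y_neq0; have y0_gt0 (u : R) : u != 0 -> 0 < u ^+ 2 + 0 ^+ 2.
  by move=> u_neq0; rewrite expr0n /= addr0 exprn_even_gt0.
rewrite /Omega_yy /= derive1E (near_eq_derive
  (g := fun u => lam1 mu * u - u * Num.sqrt (u ^+ 2 + 0 ^+ 2) ^- 3)).
  rewrite -derive1E (derive1_val (is_derive_linear_sub_radial _ (y0_gt0 _ y_neq0))).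
  rewrite expr0n /= addr0 sqrtr_sqr -(real_normK (num_real y)).
  by field; rewrite normr_eq0.
near=> u; have u_neq0 : u != 0 by near: u; exact: near_neq0.
exact/derive1_val/is_derive_Omega_y/y0_gt0.
Unshelve. all: by end_near. Qed.

End HillPotential.

Section HillEquilibria.
Variable R : realType.
Implicit Types mu : R.
Local Open Scope complex_scope.

Lemma char_poly_linAC mu p :
  char_poly (linAC mu p) = biquad (calA mu p)%:C (calB mu p)%:C.
Proof.
rewrite /linAC -(map_char_poly (real_complex R)).
by rewrite [linA mu p]/(hill_mx _ _ _) char_poly_hill_mx map_biquad !rmorphB.
Qed.

Lemma dmu_sqr mu : dmu mu ^+ 2 = 1 / 4 + 3 * (1 / 2 - mu) ^+ 2.
Proof. by rewrite sqr_sqrtr; [field | have := sqr_ge0 (mu - 1 / 2); nra]. Qed.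

Lemma dmu_ge_half mu : 1 / 2 <= dmu mu.
Proof.
have d_ge0 : 0 <= dmu mu := sqrtr_ge0 _.
by have := dmu_sqr mu; have := sqr_ge0 (1 / 2 - mu); nra.
Qed.

Lemma dmu_lt1 mu : 0 < mu < 1 -> dmu mu < 1.
Proof. by have := dmu_sqr mu; have := dmu_ge_half mu; nra. Qed.

Lemma dmu_decreasing mu mu' : mu < mu' <= 1 / 2 -> dmu mu' < dmu mu.
Proof.
by have := dmu_sqr mu; have := dmu_sqr mu'; have := dmu_ge_half mu;
  have := dmu_ge_half mu'; nra.
Qed.

Lemma expr3_powR_third (a : R) : 0 <= a -> (a `^ (- (1 / 3))) ^+ 3 = a^-1.
Proof.
move=> a_ge0; rewrite -powR_mulrn ?powR_ge0 // -powRrM.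
by rewrite (_ : - (1 / 3) * 3%:R = -1) ?powR_inv1 //; field.
Qed.

Lemma hill_equilibrium_on_axis mu (L : R -> R * R) : 0 < lam1 mu ->
  (L = @L3 R \/ L = @L4 R) ->
  exists y, [/\ L mu = (0, y), y != 0 & `|y| ^- 3 = lam1 mu].
Proof.
move=> lam1_gt0 HL; set P := lam1 mu `^ (- (1 / 3)).
have P_gt0 : 0 < P by rewrite powR_gt0.
have P3 : `|P| ^- 3 = lam1 mu by rewrite gtr0_norm // expr3_powR_third ?invrK ?ltW.
by case: HL => ->; [exists P | exists (- P)]; rewrite ?normrN ?oppr_eq0 gt_eqF.
Qed.

Lemma hill_coefficients mu (L : R -> R * R) : 0 < mu < 1 ->
  (L = @L3 R \/ L = @L4 R) ->
  calA mu (L mu) = (3 * dmu mu - 1) / 2 /\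
  calB mu (L mu) = 27 / 2 * dmu mu * (1 - dmu mu).
Proof.
move=> mu01 HL; have lam1_gt0 : 0 < lam1 mu by rewrite /lam1; have := dmu_lt1 mu01; lra.
have [y [-> y_neq0 y3]] := hill_equilibrium_on_axis lam1_gt0 HL.
rewrite /calA /calB Omega_xx_axis // Omega_xy_axis // Omega_yy_axis // y3.
by rewrite /lam1 /lam2; split; field.
Qed.

End HillEquilibria.

Section CriticalMass.
Variable R : realType.
Implicit Types (mu : R) (L : R -> R * R).

Lemma sqrt21_bounds : 9 / 2 < Num.sqrt (21 : R) < 19 / 4.
Proof.
have s2 : Num.sqrt 21 ^+ 2 = 21 :> R by rewrite sqr_sqrtr.
have s_ge0 := sqrtr_ge0 (21 : R).
by apply/andP; split; nra.
Qed.

(* The larger root of 225 d^2 - 222 d + 1, which is 4 D as a function of d. *)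
Definition d_crit : R := (37 + 8 * Num.sqrt 21) / 75.

(* Solves d(mu)^2 = 1/4 + 3 (mu - 1/2)^2 = d_crit^2 on the branch mu <= 1/2. *)
Definition mu_crit : R := 1 / 2 - Num.sqrt ((d_crit ^+ 2 - 1 / 4) / 3).

Lemma d_crit_bounds : 1 / 2 < d_crit < 1.
Proof.
have /andP[s_gt s_lt] := sqrt21_bounds.
by rewrite /d_crit; apply/andP; split; lra.
Qed.

Lemma mu_crit_bounds : 0 < mu_crit < 1 / 2.
Proof.
have /andP[d_gt d_lt] := d_crit_bounds.
have r2 : Num.sqrt ((d_crit ^+ 2 - 1 / 4) / 3) ^+ 2 = (d_crit ^+ 2 - 1 / 4) / 3.
  by rewrite sqr_sqrtr //; nra.
have r_ge0 := sqrtr_ge0 ((d_crit ^+ 2 - 1 / 4) / 3).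
by rewrite /mu_crit; apply/andP; split; nra.
Qed.

Lemma dmu_mu_crit : dmu mu_crit = d_crit.
Proof.
have /andP[d_gt _] := d_crit_bounds; have dc_ge0 : 0 <= d_crit by lra.
apply/eqP; rewrite -(eqrXn2 (_ : 0 < 2)%N) ?sqrtr_ge0 //; apply/eqP.
rewrite dmu_sqr /mu_crit subKr sqr_sqrtr; first by field.
by rewrite divr_ge0 // subr_ge0; nra.
Qed.

Lemma hill_discrD_factor mu L : 0 < mu < 1 -> (L = @L3 R \/ L = @L4 R) ->
  discrD mu (L mu) =
  225 / 4 * (dmu mu - d_crit) * (dmu mu - (37 - 8 * Num.sqrt 21) / 75).
Proof.
move=> mu01 HL; have [hA hB] := hill_coefficients mu01 HL.
have s2 : Num.sqrt 21 ^+ 2 = 21 :> R by rewrite sqr_sqrtr.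
rewrite /discrD hA hB /d_crit; move: (dmu mu) (Num.sqrt 21) s2 => d s s2.
rewrite (_ : 225 / 4 * _ * _ = 225 / 4 * (d ^+ 2 - 74 / 75 * d + (1369 - 64 * s ^+ 2) / 5625)).
  by rewrite s2; field.
by field.
Qed.

Lemma hill_calA_gt0 mu L : 0 < mu < 1 -> (L = @L3 R \/ L = @L4 R) ->
  0 < calA mu (L mu).
Proof.
by move=> mu01 HL; have [-> _] := hill_coefficients mu01 HL; have := dmu_ge_half mu; lra.
Qed.

Lemma hill_calB_gt0 mu L : 0 < mu < 1 -> (L = @L3 R \/ L = @L4 R) ->
  0 < calB mu (L mu).
Proof.
move=> mu01 HL; have [_ ->] := hill_coefficients mu01 HL.
by have := dmu_ge_half mu; have := dmu_lt1 mu01; nra.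
Qed.

Lemma hill_discrD_gt0 mu L : 0 < mu < mu_crit -> (L = @L3 R \/ L = @L4 R) ->
  0 < discrD mu (L mu).
Proof.
move=> /andP[mu_gt0 mu_lt] HL; have /andP[_ crit_lt] := mu_crit_bounds.
have /andP[s_gt _] := sqrt21_bounds; have d_ge := dmu_ge_half mu.
have d_gt : d_crit < dmu mu.
  by rewrite -dmu_mu_crit dmu_decreasing // mu_lt ltW.
rewrite hill_discrD_factor //; last by apply/andP; split; lra.
by apply: mulr_gt0; [apply: mulr_gt0|]; lra.
Qed.

Lemma hill_discrD_mu_crit L : (L = @L3 R \/ L = @L4 R) -> discrD mu_crit (L mu_crit) = 0.
Proof.
move=> HL; have /andP[crit_gt0 crit_lt] := mu_crit_bounds.
rewrite hill_discrD_factor ?dmu_mu_crit ?subrr ?mulr0 ?mul0r //.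
by apply/andP; split; lra.
Qed.

Lemma hill_discrD_lt0 mu L : mu_crit < mu <= 1 / 2 -> (L = @L3 R \/ L = @L4 R) ->
  discrD mu (L mu) < 0.
Proof.
move=> /andP[mu_gt mu_le] HL; have /andP[crit_gt0 _] := mu_crit_bounds.
have /andP[s_gt _] := sqrt21_bounds; have d_ge := dmu_ge_half mu.
have d_lt : dmu mu < d_crit by rewrite -dmu_mu_crit dmu_decreasing // mu_gt.
rewrite hill_discrD_factor //; last by apply/andP; split; lra.
have : 0 < (d_crit - dmu mu) * (dmu mu - (37 - 8 * Num.sqrt 21) / 75).
  by apply: mulr_gt0; lra.
by nra.
Qed.

End CriticalMass.

Theorem proposition2 (R : realType) :
  exists mu0 : R,
    [/\ 0 < mu0, mu0 < 1 / 2 & discrD mu0 (L3 mu0) = 0] /\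
    forall L : R -> R * R, (L = @L3 R \/ L = @L4 R) ->
      [/\ (* mu in (0, mu0): eigenvalues +-i w1, +-i w2 *)
          (forall mu : R, 0 < mu -> mu < mu0 ->
             exists w1 w2 : R, [/\ 0 < w1, 0 < w2, w1 != w2 &
               forall z : R[i], eigenvalue (linAC mu (L mu)) z <->
                 z \in [:: Complex 0 w1; Complex 0 (- w1);
                           Complex 0 w2; Complex 0 (- w2)]]),
          (* mu = mu0: a pair +-i w of multiplicity 2 *)
          (exists w : R, [/\ 0 < w,
               (forall z : R[i], eigenvalue (linAC mu0 (L mu0)) z <->
                 z \in [:: Complex 0 w; Complex 0 (- w)]),
               mup (Complex 0 w) (char_poly (linAC mu0 (L mu0))) = 2%N &
               mup (Complex 0 (- w)) (char_poly (linAC mu0 (L mu0))) = 2%N]) &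
          (* mu in (mu0, 1/2]: eigenvalues +-alpha +- i w *)
          (forall mu : R, mu0 < mu -> mu <= 1 / 2 ->
             exists alpha w : R, [/\ 0 < alpha, 0 < w &
               forall z : R[i], eigenvalue (linAC mu (L mu)) z <->
                 z \in [:: Complex alpha w; Complex alpha (- w);
                           Complex (- alpha) w; Complex (- alpha) (- w)]])].
Proof.
have /andP[crit_gt0 crit_lt] := @mu_crit_bounds R.
exists (mu_crit R); split; first by split=> //; apply: hill_discrD_mu_crit; left.
move=> L HL; split.
- move=> mu mu_gt0 mu_lt; have mu01 : 0 < mu < 1 by apply/andP; split; lra.
  apply: (eigenvalue_biquad_imag (char_poly_linAC _ _)).
  + exact: hill_calA_gt0.
  + exact: hill_calB_gt0.
  + by apply: hill_discrD_gt0; rewrite ?mu_gt0.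
- have crit01 : 0 < mu_crit R < 1 by apply/andP; split; lra.
  apply: (eigenvalue_biquad_double (char_poly_linAC _ _)).
  + exact: hill_calA_gt0.
  + exact: hill_discrD_mu_crit.
- move=> mu mu_gt mu_le; apply: (eigenvalue_biquad_complex (char_poly_linAC _ _)).
  by apply: hill_discrD_lt0; rewrite ?mu_gt.
Qed.
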